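(* Let $(S,K,I)$ be an active split graph with $\alpha=|I|$ and $\omega=|K|$, and suppose $\Phi(S)$ is simple and connected. Then: (1) $\omega\le\alpha$; (2) $S$ and $\Phi(S)$ have the same clique number; (3) if $\Phi(S)$ is complete, then $\deg(S)=\binom{\alpha}{2}$; (4) if $\Phi(S)$ is not complete, then $\left\lceil \tfrac{\alpha}{2}(\omega-1)\right\rceil\le \deg(S)<\binom{\alpha}{2}$.
   Context: All graphs are finite and simple. A split graph is a graph $S$ whose vertex set is a disjoint union $V(S)=K\,\dot\cup\,I$ with $K$ a clique and $I$ an independent set; $(K,I)$ is called a bipartition of $S$, and $(S,K,I)$ denotes $S$ together with this fixed bipartition. A 2-switch in a graph $G$ is performed on four distinct vertices $a,b,c,d$ with $ab,cd\in E(G)$ and $ac,bd\notin E(G)$: it deletes $ab,cd$ and adds $ac,bd$; $a,b,c,d$ are said to participate in it. A vertex is active in $G$ if it participates in some 2-switch on $G$; $G$ is active if all its vertices are active. For a split graph $(S,K,I)$ and distinct $u,v\in I$, $\sigma_{uv}(S)$ is the number of induced subgraphs of $S$ isomorphic to $P_4$ containing both $u$ and $v$. The factor graph $\Phi(S)$ is the loopless multigraph with vertex set $I$ having exactly $\sigma_{uv}(S)$ parallel edges between $u$ and $v$; it is simple if $\sigma_{uv}(S)\in\{0,1\}$ for all $u,v$. Graph notions (connected, complete, clique number, etc.) applied to $\Phi(S)$ refer to its underlying simple graph, in which $u\sim v$ iff $\sigma_{uv}(S)\ge1$. $\deg(S)$ denotes the number of induced subgraphs of $S$ isomorphic to $P_4$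 (equivalently, the number of 2-switches on $S$, or the number of edges of $\Phi(S)$ counted with multiplicity). *)

(* A finite simple graph on a finType T is a symmetric,
   irreflexive relation e : rel T; V(S) = T. *)
From mathcomp Require Import all_boot all_order.
Set Implicit Arguments. Unset Strict Implicit. Unset Printing Implicit Defensive.

Section SplitGraphs.
Variable T : finType.
Variable e : rel T.

Definition simple_graph : Prop := symmetric e /\ irreflexive e.

Definition split_bipartition (K I : {set T}) : Prop :=
  [/\ K :&: I = set0, K :|: I = [set: T],
      {in K &, forall x y, x != y -> e x y} &
      {in I &, forall x y, ~~ e x y}].

Definition two_switch (a b c d : T) : bool :=
  [&& uniq [:: a; b; c; d], e a b, e c d, ~~ e a c & ~~ e b d].

Definition active_vertex (v : T) : bool :=
  [exists a, exists b, exists c, exists d,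
     two_switch a b c d && (v \in [:: a; b; c; d])].

Definition active_graph : Prop := forall v : T, active_vertex v.

Definition induces_P4 (X : {set T}) : bool :=
  [exists a, exists b, exists c, exists d,
    [&& uniq [:: a; b; c; d], X == [set a; b; c; d],
        e a b, e b c, e c d, ~~ e a c, ~~ e a d & ~~ e b d]].

Definition degS : nat := #|[set X : {set T} | induces_P4 X]|.

Definition sigma (u v : T) : nat :=
  #|[set X : {set T} | [&& induces_P4 X, u \in X & v \in X]]|.

(* Underlying simple graph of the factor graph Phi(S), vertex set I. *)
Definition phi_adj (I : {set T}) : rel T :=
  fun u v => [&& u \in I, v \in I, u != v & 0 < sigma u v].

Definition phi_simple (I : {set T}) : Prop :=
  {in I &, forall u v, u != v -> sigma u v <= 1}.

Definition phi_connected (I : {set T}) : Prop :=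
  {in I &, forall u v, connect (phi_adj I) u v}.

Definition phi_complete (I : {set T}) : Prop :=
  {in I &, forall u v, u != v -> phi_adj I u v}.

Definition is_clique (r : rel T) (A : {set T}) : bool :=
  [forall x in A, forall y in A, (x != y) ==> r x y].

Definition clique_number (r : rel T) (V : {set T}) : nat :=
  \max_(A : {set T} | (A \subset V) && is_clique r A) #|A|.

End SplitGraphs.

(* In a split graph every induced P4 has the form u - x - y - v with u, v in I,
   x in N(u) minus N(v) and y in N(v) minus N(u), where N(u) is the neighbourhood of u
   in K.  Simplicity of Phi(S) means that such a path through u and v is unique, so
   whenever both differences are nonempty they are singletons; hence neighbourhoods
   of Phi-adjacent vertices have the same size, and by connectivity all N(u) have
   the same size and u ~ v iff N(u) <> N(v).  Activity then forces either every N(u)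
   to be a singleton or every N(u) to miss exactly one vertex of K, each vertex of K
   being used: there are exactly omega distinct neighbourhoods.  So Phi(S) is complete
   omega-partite, deg(S) is its number of edges, and the four claims are counting. *)

From mathcomp Require Import all_boot all_order.

Set Implicit Arguments.
Unset Strict Implicit.
Unset Printing Implicit Defensive.

Section FinsetFacts.
Variable T : finType.

Lemma eq_set2 (a b c d : T) :
  [set a; b] = [set c; d] -> (a = c /\ b = d) \/ (a = d /\ b = c).
Proof.
move=> E; have aE : a \in [set c; d] by rewrite -E set21.
have bE : b \in [set c; d] by rewrite -E set22.
have dE : d \in [set a; b] by rewrite E set22.
have cE : c \in [set a; b] by rewrite E set21.
by case/set2P: aE => ?; case/set2P: bE => ?; case/set2P: cE => ?; case/set2P: dE => ?;
  subst; auto.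
Qed.

Lemma set2_eq_of_mem (a b x y : T) :
  x \in [set a; b] -> y \in [set a; b] -> x != y -> [set x; y] = [set a; b].
Proof. by move=> /set2P[]-> /set2P[]->; rewrite ?eqxx // setUC. Qed.

Lemma setD_eq0_card (A B : {set T}) : #|A| = #|B| -> (A :\: B == set0) = (A == B).
Proof. by move=> AB; rewrite setD_eq0 eqEcard AB leqnn andbT. Qed.

Definition pair_set (D : {set T * T}) : {set {set T}} := [set [set p.1; p.2] | p in D].

Lemma card_le_double_pair_set (D : {set T * T}) : #|D| <= 2 * #|pair_set D|.
Proof.
(* The bit remembers which endpoint comes first, so no two arcs collide. *)
pose ord_pair (p : T * T) := ([set p.1; p.2], enum_rank p.1 < enum_rank p.2).
have ord_pair_inj : injective ord_pair.
  move=> [a b] [c d] [/eq_set2[[-> ->] // | [-> ->]]].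
  by case: ltngtP => // /val_inj/enum_rank_inj ->.
rewrite -(card_imset D ord_pair_inj) mulnC -[2]card_bool -cardsT -cardsX.
apply/subset_leq_card/subsetP => _ /imsetP[p pD ->].
by rewrite in_setX in_setT andbT; apply: imset_f.
Qed.

Lemma is_cliqueP (r : rel T) (A : {set T}) :
  reflect {in A &, forall x y, x != y -> r x y} (is_clique r A).
Proof.
apply: (iffP forall_inP) => [cl x y xA yA | cl x xA].
  by move/forall_inP/(_ y yA)/implyP: (cl x xA).
by apply/forall_inP => y yA; apply/implyP; apply: cl.
Qed.

End FinsetFacts.

Lemma exists_injective_subset (aT rT : finType) (f : aT -> rT) (A : {set aT}) :
  exists B : {set aT}, [/\ B \subset A, {in B &, injective f} & #|B| = #|f @: A|].
Proof.
pose rep y := [pick x in A | f x == y].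
have rep_f a : a \in A -> exists2 x, rep (f a) = Some x & x \in A /\ f x = f a.
  rewrite /rep; case: pickP => [x /andP[xA /eqP] | /(_ a) + aA]; first by exists x.
  by rewrite aA eqxx.
pose B := [set x in A | rep (f x) == Some x].
have B_inj : {in B &, injective f}.
  move=> x x'; rewrite !inE => /andP[_ /eqP rx] /andP[_ /eqP rx'] fx.
  by apply: Some_inj; rewrite -rx -rx' fx.
exists B; split=> //; first by apply/subsetP => x; rewrite inE => /andP[].
rewrite -(card_in_imset B_inj); apply: eq_card => y.
apply/imsetP/imsetP => [[x] | [a aA ->]]; first by rewrite inE => /andP[xA _] ->; exists x.
have [x rx [xA fx]] := rep_f a aA.
by exists x; rewrite // inE xA fx rx eqxx.
Qed.

Section SplitGraph.
Variables (T : finType) (e : rel T) (K I : {set T}).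
Hypothesis e_sym : symmetric e.
Hypothesis KI : split_bipartition e K I.

Lemma in_I x : (x \in I) = (x \notin K).
Proof.
case: KI => KI0 KIT _ _; apply/idP/idP => [xI | xK].
  apply/negP => xK; have : x \in K :&: I by rewrite inE xK xI.
  by rewrite KI0 inE.
by have := in_setT x; rewrite -KIT inE (negbTE xK).
Qed.

Lemma I_neq_K u x : u \in I -> x \in K -> u != x.
Proof. by rewrite in_I => uK xK; apply: contraNneq uK => ->. Qed.

Lemma K_clique : {in K &, forall x y, x != y -> e x y}.
Proof. by case: KI. Qed.

Lemma I_indep : {in I &, forall x y, ~~ e x y}.
Proof. by case: KI. Qed.

Definition nbh u := [set x in K | e u x].

Lemma nbh_sub u : nbh u \subset K.
Proof. by apply/subsetP => x; rewrite inE => /andP[]. Qed.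

Lemma nbhD_K u v x : x \in nbh u :\: nbh v -> x \in K.
Proof. by case/setDP=> /(subsetP (nbh_sub u)). Qed.

Lemma edge_in_K x y : e x y -> (x \in K) || (y \in K).
Proof.
move=> xy; apply: contraT; rewrite negb_or -!in_I => /andP[xI yI].
by move: (I_indep xI yI); rewrite xy.
Qed.

Lemma nonedge_in_I x y : ~~ e x y -> x != y -> (x \in I) || (y \in I).
Proof.
move=> nxy xy; apply: contraT; rewrite negb_or !in_I !negbK => /andP[xK yK].
by move: (K_clique xK yK xy); rewrite (negbTE nxy).
Qed.

Lemma induces_P4_nbh a b c d : a \in I -> d \in I ->
  b \in nbh a :\: nbh d -> c \in nbh d :\: nbh a -> induces_P4 e [set a; b; c; d].
Proof.
move=> aI dI; rewrite !inE => /and3P[nbd bK ab] /and3P[nca cK dc].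
rewrite bK /= in nbd; rewrite cK /= in nca.
have bc : b != c by apply: contraNneq nca => <-.
apply/existsP; exists a; apply/existsP; exists b; apply/existsP; exists c.
apply/existsP; exists d; rewrite eqxx ab (K_clique bK cK bc) nca (I_indep aI dI).
rewrite e_sym dc e_sym nbd /= !inE !negb_or bc (I_neq_K aI bK) (I_neq_K aI cK).
rewrite [b == d]eq_sym (I_neq_K dI bK) [c == d]eq_sym (I_neq_K dI cK) !andbT.
by apply: contraNneq nbd => <-.
Qed.

Lemma induces_P4_split X : induces_P4 e X -> exists a d b c,
  [/\ a \in I, d \in I, b \in nbh a :\: nbh d, c \in nbh d :\: nbh a
    & X = [set a; b; c; d]].
Proof.
case/existsP=> a /existsP[b /existsP[c /existsP[d]]].
case/and3P=> + /eqP -> /and3P[ab bc /and4P[cd nac nad nbd]].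
rewrite /= !inE !negb_or => /and4P[/and3P[_ ac' ad'] /andP[_ bd'] _ _].
exists a, d, b, c; rewrite !inE !in_I ab (e_sym d) (e_sym d) cd.
move: (nonedge_in_I nac ac') (nonedge_in_I nad ad') (nonedge_in_I nbd bd').
move: nac nbd (edge_in_K ab) (edge_in_K bc) (edge_in_K cd); rewrite !in_I.
by case: (a \in K); case: (b \in K); case: (c \in K); case: (d \in K) => //= -> ->.
Qed.

Lemma induces_P4_through X u v : induces_P4 e X -> u \in X -> v \in X ->
  u \in I -> v \in I -> u != v -> exists b c,
  [/\ b \in nbh u :\: nbh v, c \in nbh v :\: nbh u & X = [set u; b; c; v]].
Proof.
case/induces_P4_split=> a [d [b [c [aI dI bD cD ->]]]] uX vX uI vI uv.
have [bK cK] := (nbhD_K bD, nbhD_K cD).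
have endpoint w : w \in [set a; b; c; d] -> w \in I -> w \in [set a; d].
  by rewrite !inE -!orbA in_I => /or4P[] /eqP-> //; rewrite ?bK ?cK ?eqxx ?orbT.
have := set2_eq_of_mem (endpoint u uX uI) (endpoint v vX vI) uv.
case/eq_set2=> [[-> ->] | [-> ->]]; first by exists b, c.
exists c, b; split=> //; apply/setP => z; rewrite !inE.
by do 4!case: eqP.
Qed.

Lemma phi_adjP u v : u \in I -> v \in I ->
  phi_adj e I u v = (nbh u :\: nbh v != set0) && (nbh v :\: nbh u != set0).
Proof.
move=> uI vI; apply/idP/idP.
  case/and4P=> _ _ uv /card_gt0P[X]; rewrite inE => /and3P[XP4 uX vX].
  have [b [c [bD cD _]]] := induces_P4_through XP4 uX vX uI vI uv.
  by apply/andP; split; apply/set0Pn; [exists b | exists c].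
case/andP=> /set0Pn[b bD] /set0Pn[c cD].
have uv : u != v by apply: contraTneq bD => ->; rewrite setDv inE.
rewrite /phi_adj uI vI uv; apply/card_gt0P; exists [set u; b; c; v].
by rewrite inE induces_P4_nbh // !inE !eqxx ?orbT.
Qed.

Lemma phi_adj_sym : symmetric (phi_adj e I).
Proof.
have sigma_sym u v : sigma e u v = sigma e v u.
  by apply: eq_card => X; rewrite !inE [(u \in X) && _]andbC.
by move=> u v; rewrite /phi_adj sigma_sym eq_sym; case: (u \in I); case: (v \in I).
Qed.

Definition phi_arcs := [set p : T * T | phi_adj e I p.1 p.2].

Lemma pair_set_arcs_sub : pair_set phi_arcs \subset [set P : {set T} | P \subset I & #|P| == 2].
Proof.
apply/subsetP => _ /imsetP[[u v] + ->]; rewrite !inE => /and4P[uI vI uv _].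
by rewrite cards2 uv subUset !sub1set uI vI.
Qed.

Lemma card_pair_set_arcs_complete :
  phi_complete e I -> #|pair_set phi_arcs| = 'C(#|I|, 2).
Proof.
move=> complete; rewrite -cards_draws; congr #|pred_of_set _|.
apply/eqP; rewrite eqEsubset pair_set_arcs_sub; apply/subsetP => P.
rewrite inE => /andP[PI /cards2P[u [v [uv PE]]]].
have [uI vI] : u \in I /\ v \in I by rewrite !(subsetP PI) // PE !inE eqxx ?orbT.
by rewrite PE; apply/imsetP; exists (u, v); rewrite // inE complete.
Qed.

Lemma card_pair_set_arcs_lt :
  ~ phi_complete e I -> #|pair_set phi_arcs| < 'C(#|I|, 2).
Proof.
move=> incomplete; rewrite -cards_draws; apply: proper_card.
rewrite properEneq pair_set_arcs_sub andbT; apply: contra_notN incomplete.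
move=> /eqP draws u v uI vI uv.
have : [set u; v] \in pair_set phi_arcs.
  by rewrite draws inE cards2 uv subUset !sub1set uI vI.
case/imsetP=> [[u' v']]; rewrite inE => adj /eq_set2[[-> ->] // | [-> ->]].
by rewrite phi_adj_sym.
Qed.

Hypothesis simple : phi_simple e I.

Lemma induces_P4_unique u v X Y : u \in I -> v \in I -> u != v ->
  induces_P4 e X -> u \in X -> v \in X -> induces_P4 e Y -> u \in Y -> v \in Y ->
  X = Y.
Proof.
move=> uI vI uv XP4 uX vX YP4 uY vY; apply: (card_le1_eqP (simple uI vI uv)).
  by rewrite inE YP4 uY vY.
by rewrite inE XP4 uX vX.
Qed.

Lemma card_nbh_setD_le1 u v : u \in I -> v \in I ->
  nbh v :\: nbh u != set0 -> #|nbh u :\: nbh v| <= 1.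
Proof.
move=> uI vI /set0Pn[y yD]; apply/card_le1_eqP => x x' xD x'D.
(* Both induced paths u - x - y - v and u - x' - y - v contain u and v. *)
have uv : u != v by apply: contraTneq yD => ->; rewrite setDv inE.
have P4 z : z \in nbh u :\: nbh v -> induces_P4 e [set u; z; y; v].
  by move=> zD; apply: induces_P4_nbh.
have E : [set u; x; y; v] = [set u; x'; y; v].
  by apply: induces_P4_unique uI vI uv (P4 x xD) _ _ (P4 x' x'D) _ _;
    rewrite !inE eqxx ?orbT.
have : x' \in [set u; x; y; v] by rewrite E !inE eqxx orbT.
have [x'u _] := setDP x'D; have x'K := nbhD_K x'D.
rewrite !inE -!orbA => /or4P[] /eqP x'E //.
- by move: (I_neq_K uI x'K); rewrite x'E eqxx.
- by case/setDP: yD; rewrite -x'E x'u.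
- by move: (I_neq_K vI x'K); rewrite x'E eqxx.
Qed.

Lemma card_nbh_eq_of_adj u v : phi_adj e I u v -> #|nbh u| = #|nbh v|.
Proof.
move=> adj; have /and4P[uI vI _ _] := adj; move: adj; rewrite phi_adjP //.
have card1 w w' : w \in I -> w' \in I -> nbh w :\: nbh w' != set0 ->
    nbh w' :\: nbh w != set0 -> #|nbh w :\: nbh w'| = 1.
  by move=> wI w'I D D'; apply/eqP; rewrite eqn_leq card_nbh_setD_le1 // card_gt0.
case/andP=> Duv Dvu; rewrite -(cardsID (nbh v) (nbh u)) -(cardsID (nbh u) (nbh v)).
by rewrite setIC card1 ?card1.
Qed.

Lemma setI_P4 u b c v : u \in I -> v \in I -> b \in K -> c \in K ->
  [set u; b; c; v] :&: I = [set u; v].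
Proof.
move=> uI vI bK cK; apply/setP => z; rewrite !inE andbC.
have [zI | zI] /= := boolP (z \in I).
  by rewrite (negbTE (I_neq_K zI bK)) (negbTE (I_neq_K zI cK)) !orbF.
by apply/esym/negbTE; apply: contra zI => /orP[] /eqP ->.
Qed.

Lemma P4_setI_adj X : induces_P4 e X ->
  exists u v, [/\ phi_adj e I u v, u \in X, v \in X & X :&: I = [set u; v]].
Proof.
case/induces_P4_split=> u [v [b [c [uI vI bD cD ->]]]].
exists u, v; rewrite setI_P4 ?(nbhD_K bD) ?(nbhD_K cD) // phi_adjP // !inE !eqxx ?orbT.
by split=> //; apply/andP; split; apply/set0Pn; [exists b | exists c].
Qed.

Lemma card_P4_pair_set : degS e = #|pair_set phi_arcs|.
Proof.
have setI_inj : {in [set X | induces_P4 e X] &, injective (fun X => X :&: I)}.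
  move=> X Y; rewrite !inE => XP4 YP4 XYI.
  have [u [v [adj uX vX XI]]] := P4_setI_adj XP4; have /and4P[uI vI uv _] := adj.
  have uvY w : w \in [set u; v] -> w \in Y by rewrite -XI XYI => /setIP[].
  by apply: (induces_P4_unique uI vI uv XP4 uX vX YP4); apply: uvY; rewrite !inE eqxx ?orbT.
rewrite /degS -(card_in_imset setI_inj); apply: eq_card => P.
apply/imsetP/imsetP => [[X] | [[u v]]].
  by rewrite inE => /P4_setI_adj[u [v [adj _ _ ->]]] ->; exists (u, v); rewrite ?inE.
rewrite inE /= => adj ->; have /and4P[uI vI _ _] := adj.
move: adj; rewrite phi_adjP // => /andP[/set0Pn[b bD] /set0Pn[c cD]].
exists [set u; b; c; v]; first by rewrite inE induces_P4_nbh.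
by rewrite setI_P4 ?(nbhD_K bD) ?(nbhD_K cD).
Qed.

Hypothesis connected : phi_connected e I.

Lemma card_nbh_const u v : u \in I -> v \in I -> #|nbh u| = #|nbh v|.
Proof.
move=> uI vI; case/connectP: (connected uI vI) => p.
elim: p u {uI} => [|w p IH] u /=; first by move=> _ ->.
by case/andP=> /card_nbh_eq_of_adj -> /IH.
Qed.

Lemma card_nbh_setD u v : u \in I -> v \in I -> #|nbh u :\: nbh v| <= 1.
Proof.
move=> uI vI; have [Dvu|] := eqVneq (nbh v :\: nbh u) set0; last exact: card_nbh_setD_le1.
move/eqP: Dvu; rewrite setD_eq0_card ?(card_nbh_const vI uI) // => /eqP->.
by rewrite setDv cards0.
Qed.

Lemma phi_adjE u v : u \in I -> v \in I -> phi_adj e I u v = (nbh u != nbh v).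
Proof.
move=> uI vI; rewrite phi_adjP // !setD_eq0_card ?(card_nbh_const uI vI) //.
by rewrite eq_sym andbb.
Qed.

Lemma nbh_setD1_sub u v x : u \in I -> v \in I ->
  x \in nbh u :\: nbh v -> nbh u :\ x \subset nbh v.
Proof.
move=> uI vI xD; apply/subsetP => z; rewrite in_setD1 => /andP[zx zu].
apply: contraR zx => zv; apply/eqP.
by apply: (card_le1_eqP (card_nbh_setD uI vI)); rewrite // in_setD zu zv.
Qed.

Hypothesis active : active_graph e.

Lemma active_split z : exists u v x y,
  [/\ u \in I, v \in I, x \in nbh u :\: nbh v, y \in nbh v :\: nbh u
    & z \in [set u; x; y; v]].
Proof.
case/existsP: (active z) => a /existsP[b /existsP[c /existsP[d]]].
case/andP=> /and5P[+ ab cd nac nbd].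
rewrite /= !inE !negb_or => /and4P[/and3P[_ ac' _] /andP[_ bd'] _ _] zin.
move: (edge_in_K ab) (edge_in_K cd) (nonedge_in_I nac ac') (nonedge_in_I nbd bd').
rewrite !in_I; case aK: (a \in K); case bK: (b \in K); case cK: (c \in K);
  case dK: (d \in K) => //= _ _ _ _.
- exists b, c, a, d; rewrite !in_I !inE aK bK cK dK [e c a]e_sym [e b a]e_sym.
  rewrite ab cd (negbTE nac) (negbTE nbd).
  by split=> //; move: zin; do 4!case: eqP.
- exists a, d, b, c; rewrite !in_I !inE aK bK cK dK [e d b]e_sym [e d c]e_sym.
  rewrite ab cd (negbTE nac) (negbTE nbd).
  by split=> //; move: zin; do 4!case: eqP.
Qed.

Lemma active_K x : x \in K ->
  (exists2 u, u \in I & x \in nbh u) /\ (exists2 v, v \in I & x \notin nbh v).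
Proof.
move=> xK; have [u [v [x' [y [uI vI x'D yD]]]]] := active_split x.
rewrite !inE -!orbA => /or4P[] /eqP xE.
- by move: (I_neq_K uI xK); rewrite xE eqxx.
- by case/setDP: x'D; rewrite -xE => xu xv; split; [exists u | exists v].
- by case/setDP: yD; rewrite -xE => xv xu; split; [exists v | exists u].
- by move: (I_neq_K vI xK); rewrite xE eqxx.
Qed.

Lemma card_nbh_bounds u : u \in I -> 0 < #|nbh u| < #|K|.
Proof.
have bounds w w' x y : x \in nbh w :\: nbh w' -> y \in nbh w' :\: nbh w ->
    0 < #|nbh w| < #|K|.
  case/setDP=> xw _ /setDP[yw' yw]; rewrite card_gt0; apply/andP; split.
    by apply/set0Pn; exists x.
  apply/proper_card/properP; split; first exact: nbh_sub.
  by exists y; rewrite ?(subsetP (nbh_sub w') _ yw').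
move=> uI; have [u' [v [x [y [u'I vI xD yD]]]]] := active_split u.
rewrite !inE -!orbA => /or4P[] /eqP uE.
- by rewrite uE; apply: bounds xD yD.
- by move: (I_neq_K uI (nbhD_K xD)); rewrite uE eqxx.
- by move: (I_neq_K uI (nbhD_K yD)); rewrite uE eqxx.
- by rewrite uE; apply: bounds yD xD.
Qed.

Lemma nbh_small_or_cosmall u : u \in I -> (#|nbh u| <= 1) || (#|K :\: nbh u| <= 1).
Proof.
(* Otherwise take p <> q in K outside N(u), v and w with p in N(v) and q in N(w),
   a common vertex c of N(u), N(v), N(w), and t with c outside N(t): then N(t)
   contains N(u) minus c together with p and q, one vertex too many. *)
move=> uI; rewrite -implyNb -ltnNge; apply/implyP => big.
rewrite leqNgt; apply/negP => /card_gt1P[p [q [pD qD pq]]].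
have [pK pu] := setDP pD; have [qK qu] := setDP qD.
have [[v vI pv] _] := active_K pK; have [[w wI qw] _] := active_K qK.
have qwu : q \in nbh w :\: nbh u by rewrite in_setD qw qu.
have pvw : p \in nbh v :\: nbh w.
  rewrite in_setD pv andbT; apply: contraT; rewrite negbK => pw.
  have : p \in nbh w :\ q by rewrite in_setD1 pq pw.
  by move/(subsetP (nbh_setD1_sub wI uI qwu)); rewrite (negbTE pu).
have [c cuv] : exists c, c \in nbh u :&: nbh v.
  apply/set0Pn; rewrite -card_gt0 lt0n; move: big.
  rewrite -(cardsID (nbh v) (nbh u)); apply: contraTneq => ->.
  by rewrite add0n -leqNgt card_nbh_setD.
have [cu cv] := setIP cuv; have cK := subsetP (nbh_sub u) _ cu.
have [cp cq] : c != p /\ c != q.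
  by split; [apply: contraNneq pu | apply: contraNneq qu] => <-.
have cw : c \in nbh w.
  by apply: (subsetP (nbh_setD1_sub vI wI pvw)); rewrite in_setD1 cp.
have [_ [t tI ct]] := active_K cK.
have sub : p |: (q |: (nbh u :\ c)) \subset nbh t.
  have ct' w' : w' \in I -> c \in nbh w' -> c \in nbh w' :\: nbh t by rewrite in_setD ct.
  rewrite !subUset !sub1set (nbh_setD1_sub uI tI (ct' u uI cu)) andbT.
  rewrite (subsetP (nbh_setD1_sub vI tI (ct' v vI cv))) ?in_setD1 ?pv ?(eq_sym p) ?cp //=.
  by apply: (subsetP (nbh_setD1_sub wI tI (ct' w wI cw))); rewrite in_setD1 qw eq_sym cq.
have := subset_leq_card sub; rewrite !cardsU1 (card_nbh_const tI uI) (cardsD1 c (nbh u)) cu.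
rewrite !in_setU1 !in_setD1 (negbTE pq) (negbTE pu) (negbTE qu) !andbF /=.
by rewrite add1n ltnn.
Qed.

Lemma nbh_values_set1 : {in I, forall u, #|nbh u| = 1} ->
  nbh @: I = [set [set x] | x in K].
Proof.
move=> small; apply/setP => A; apply/imsetP/imsetP => [[u uI ->] | [x xK ->]].
  have /eqP/cards1P[x nE] := small u uI; exists x => //.
  by apply: (subsetP (nbh_sub u)); rewrite nE set11.
have [[u uI xu] _] := active_K xK; exists u => //.
by have /eqP/cards1P[y nE] := small u uI; move: xu; rewrite nE => /set1P ->.
Qed.

Lemma nbh_values_setD1 : {in I, forall u, #|K :\: nbh u| = 1} ->
  nbh @: I = [set K :\ x | x in K].
Proof.
move=> cosmall; have nbhE u : nbh u = K :\: (K :\: nbh u).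
  by rewrite setDDr setDv set0U (setIidPr (nbh_sub u)).
apply/setP => A; apply/imsetP/imsetP => [[u uI ->] | [x xK ->]].
  have /eqP/cards1P[x nE] := cosmall u uI; exists x; last by rewrite nbhE nE.
  by have /setDP[] : x \in K :\: nbh u by rewrite nE set11.
have [_ [v vI xv]] := active_K xK; exists v => //.
have /eqP/cards1P[y nE] := cosmall v vI; rewrite nbhE nE.
have : x \in K :\: nbh v by rewrite in_setD xv xK.
by rewrite nE => /set1P ->.
Qed.

Lemma card_nbh_values : #|nbh @: I| = #|K|.
Proof.
have [small | cosmall] :
    {in I, forall u, #|nbh u| = 1} \/ {in I, forall u, #|K :\: nbh u| = 1}.
  have [/exists_inP[u0 u0I small0] | /exists_inPn large] :=
    boolP [exists u in I, #|nbh u| <= 1].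
    left=> u uI; apply/eqP; rewrite eqn_leq (card_nbh_const uI u0I) small0.
    by case/andP: (card_nbh_bounds u0I).
  right=> u uI; have := nbh_small_or_cosmall uI; rewrite (negbTE (large u uI)) /=.
  move=> le1; apply/eqP; rewrite eqn_leq le1 (cardsDS (nbh_sub u)) subn_gt0.
  by case/andP: (card_nbh_bounds uI).
  by rewrite nbh_values_set1 // card_imset //; apply: set1_inj.
rewrite nbh_values_setD1 // card_in_imset // => x y xK yK xy.
by move/setP/(_ y): xy; rewrite !in_setD1 eqxx yK andbT => /negbFE/eqP.
Qed.

Lemma clique_number_split : clique_number e [set: T] = #|K|.
Proof.
apply/eqP; rewrite eqn_leq; apply/andP; split; last first.
  by apply: leq_bigmax_cond; rewrite subsetT; apply/is_cliqueP; apply: K_clique.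
apply/bigmax_leqP => A /andP[_ /is_cliqueP Acl].
have [AK | /subsetPn[u uA]] := boolP (A \subset K); first exact: subset_leq_card.
rewrite -in_I => uI; have sub : A :\ u \subset nbh u.
  apply/subsetP => z; rewrite in_setD1 => /andP[zu zA].
  have euz : e u z by apply: Acl; rewrite // eq_sym.
  rewrite inE euz andbT -[z \in K]negbK -in_I; apply/negP => zI.
  by move: (I_indep uI zI); rewrite euz.
case/andP: (card_nbh_bounds uI) => _ ltK.
by rewrite (cardsD1 u) uA add1n (leq_ltn_trans (subset_leq_card sub) ltK).
Qed.

Lemma clique_number_phi : clique_number (phi_adj e I) I = #|nbh @: I|.
Proof.
apply/eqP; rewrite eqn_leq; apply/andP; split.
  apply/bigmax_leqP => A /andP[AI /is_cliqueP Acl].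
  have nbh_inj : {in A &, injective nbh}.
    move=> u v uA vA; apply: contra_eq => uv.
    by rewrite -phi_adjE ?(subsetP AI) //; apply: Acl.
  by rewrite -(card_in_imset nbh_inj) subset_leq_card ?imsetS.
have [B [BI nbh_inj <-]] := exists_injective_subset nbh I.
apply: leq_bigmax_cond; rewrite BI /=; apply/is_cliqueP => u v uB vB uv.
by rewrite phi_adjE ?(subsetP BI) //; apply: contra_neq uv; apply: nbh_inj.
Qed.

Lemma card_phi_arcs : #|I| * (#|K| - 1) <= #|phi_arcs|.
Proof.
have arcs_from u : u \in I -> #|K| - 1 <= #|[set v | phi_adj e I u v]|.
  move=> uI; rewrite -card_nbh_values (cardsD1 (nbh u)) imset_f // add1n subn1 /=.
  apply: leq_trans (leq_imset_card nbh _); apply/subset_leq_card/subsetP.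
  move=> N /setD1P[nNu /imsetP[v vI NE]]; rewrite NE in nNu *.
  by apply: imset_f; rewrite inE phi_adjE // eq_sym.
have -> : #|phi_arcs| = \sum_u #|[set v | phi_adj e I u v]|.
  rewrite -sum1dep_card (eq_bigl (fun p => xpredT p.1 && phi_adj e I p.1 p.2)) //.
  rewrite -(pair_big_dep xpredT (phi_adj e I) (fun _ _ => 1)).
  by apply: eq_bigr => u _; rewrite sum1dep_card.
rewrite -sum_nat_const big_mkcond /=; apply: leq_sum => u _.
by case: ifP => // uI; apply: arcs_from.
Qed.

End SplitGraph.

Theorem corollary5p3 (T : finType) (e : rel T) (K I : {set T}) :
  simple_graph e ->
  split_bipartition e K I ->
  active_graph e ->
  phi_simple e I ->
  phi_connected e I ->
  [/\ #|K| <= #|I|,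
      clique_number e [set: T] = clique_number (phi_adj e I) I,
      (phi_complete e I -> degS e = 'C(#|I|, 2)) &
      (~ phi_complete e I ->
         uphalf (#|I| * (#|K| - 1)) <= degS e < 'C(#|I|, 2))].
Proof.
move=> [e_sym _] KI active simple connected.
have card_K := card_nbh_values e_sym KI simple connected active.
have deg_E := card_P4_pair_set e_sym KI simple.
split.
- by rewrite -card_K leq_imset_card.
- rewrite (clique_number_split e_sym KI active).
  by rewrite (clique_number_phi e_sym KI simple connected) card_K.
- by move=> complete; rewrite deg_E card_pair_set_arcs_complete.
move=> incomplete; rewrite deg_E card_pair_set_arcs_lt // andbT leq_uphalf_double.
rewrite -muln2 [_ * 2]mulnC.
exact: leq_trans (card_phi_arcs e_sym KI simple connected active) (card_le_double_pair_set _).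
Qed.
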